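(* Let $n\ge 1$ and let $\pi=\pi_1\pi_2\cdots\pi_n\in S_n$ be a permutation of $\{1,\dots,n\}$ (so $\pi_i=\pi(i)$). Let $$M=\{\pi_j-i \;:\; 1\le i<j\le n,\ \pi_i>\pi_j\}$$ and let $m=\#M$ be the number of distinct elements of $M$. Then there exist at most $m$ permutations $\rho^1,\rho^2,\dots$ of bandwidth $1$ (i.e. $|\rho^j_i-i|\le 1$ for all $i$) such that $\pi=\rho^1\rho^2\cdots$ (product in $S_n$; when $m=0$, $\pi$ is the identity, the empty product).
   Context: A permutation $\rho\in S_n$ has bandwidth $w$ if $|\rho_i-i|\le w$ for all $i$; equivalently its permutation matrix $P$ (with $P_{i,\rho_i}=1$ and all other entries $0$) satisfies $P_{i,j}=0$ whenever $|i-j|>w$. *)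

(* Permutations of {1..n} are modelled as {perm 'I_n}
   (0-indexed: value k in 'I_n stands for k+1; differences are unchanged). *)
From HB Require Import structures.
From mathcomp Require Import all_boot all_order all_algebra all_fingroup.
Set Implicit Arguments. Unset Strict Implicit. Unset Printing Implicit Defensive.

Definition bandwidth (n w : nat) (rho : {perm 'I_n}) : bool :=
  [forall i : 'I_n, ((rho i : nat) - i <= w) && ((i : nat) - rho i <= w)]%N.

Definition Mset (n : nat) (pi : {perm 'I_n}) : seq int :=
  undup (map (fun p : 'I_n * 'I_n => ((pi p.2 : nat)%:Z - (p.1 : nat)%:Z)%R)
    (filter (fun p : 'I_n * 'I_n =>
               ((p.1 : nat) < p.2)%N && ((pi p.2 : nat) < pi p.1)%N)
            (enum [set: 'I_n * 'I_n]))).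

From mathcomp Require Import all_boot all_order all_algebra all_fingroup zify.

Set Implicit Arguments.
Unset Strict Implicit.
Unset Printing Implicit Defensive.

(* Interpolate between the identity and pi by a sweep of linear orders on the
   positions: at stage k, two positions i < j are in position order, except
   that an inversion (pi_i > pi_j) is put in value order once
   k > pi_j - i + n.  Ranking the positions in the stage-k order gives
   permutations sigma_k with sigma_0 = 1 and sigma_(2n) = pi.  From one stage
   to the next, each position gains at most one predecessor and loses at most
   one, so its rank moves by at most 1 and sigma_k^-1 sigma_(k+1) has
   bandwidth 1; moreover sigma only changes at stages k with k - n in M.
   Telescoping writes pi as a product of at most #M such factors. *)

Lemma card_ord_ltn n m : (m <= n)%N -> #|[set i : 'I_n | (i < m)%N]| = m.
Proof.
move=> le_mn; rewrite -sum1_card.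
rewrite (eq_bigl (fun i : 'I_n => (i < m)%N)); last by move=> i; rewrite inE.
by rewrite (big_ord_narrow le_mn) sum1_card card_ord.
Qed.

Lemma leq_card_setD (T : finType) (A B : {set T}) : (#|A| <= #|B| + #|A :\: B|)%N.
Proof. by rewrite -(cardsID B A) leq_add2r subset_leq_card ?subsetIr. Qed.

Lemma telescope_prod (gT : finGroupType) (f : nat -> gT) N :
  (\prod_(k <- iota 0 N) ((f k)^-1 * f k.+1) = (f 0)^-1 * f N)%g.
Proof.
elim: N => [|N IH]; first by rewrite big_nil mulVg.
by rewrite -addn1 iotaD big_cat big_seq1 IH /= mulgA mulgK addn1.
Qed.

Lemma bandwidth1_mulVg n (s s' : {perm 'I_n}) :
  (forall x, s' x <= (s x).+1 /\ s x <= (s' x).+1)%N -> bandwidth 1 (s^-1 * s')%g.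
Proof.
move=> near_ss'; apply/forallP => i.
have [x ->] : exists x, i = s x by exists (s^-1 i)%g; rewrite permKV.
by rewrite permM permK; have [] := near_ss' x; lia.
Qed.

Section RankPermutation.

Variables (n : nat) (r : rel 'I_n).

Definition rank (x : 'I_n) : nat := #|[set y | r y x]|.

Hypothesis r_irr : irreflexive r.

Lemma rank_lt x : (rank x < n)%N.
Proof.
rewrite /rank -[X in (_ < X)%N](card_ord n) -cardsT; apply: proper_card.
by apply/properP; split; [apply/subsetP => y; rewrite inE | exists x; rewrite !inE ?r_irr].
Qed.

Hypothesis r_trans : transitive r.

Lemma rank_mono x y : r y x -> (rank y < rank x)%N.
Proof.
move=> ryx; apply: proper_card; apply/properP; split; last first.
  by exists y; rewrite !inE ?r_irr.
by apply/subsetP => z; rewrite !inE => /r_trans; apply.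
Qed.

Hypothesis r_total : forall x y, x != y -> r x y || r y x.

Lemma rank_inj : injective (fun x => Ordinal (rank_lt x)).
Proof.
move=> x y /(congr1 val) /= eq_rank; apply/eqP/negPn/negP => /r_total.
by case/orP => /rank_mono; rewrite eq_rank ltnn.
Qed.

Definition rank_perm : {perm 'I_n} := perm rank_inj.

Lemma rank_permE x : rank_perm x = rank x :> nat.
Proof. by rewrite permE. Qed.

Lemma rank_perm_eq (s : {perm 'I_n}) :
  (forall x y, r x y = (s x < s y)%N) -> rank_perm = s.
Proof.
move=> r_s; apply/permP => x; apply: val_inj; rewrite /= rank_permE /rank.
have -> : [set y | r y x] = s @^-1: [set i : 'I_n | (i < s x)%N].
  by apply/setP => y; rewrite !inE r_s.
rewrite card_preimset; last exact: perm_inj.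
by rewrite card_ord_ltn // ltnW.
Qed.

End RankPermutation.

Lemma rank_succ_le n (r r' : rel 'I_n) x :
  (#|[set y | r' y x & ~~ r y x]| <= 1)%N -> (rank r' x <= (rank r x).+1)%N.
Proof.
move=> few_new; apply: leq_trans (leq_card_setD _ [set y | r y x]) _.
rewrite -addn1 leq_add2l; apply: leq_trans few_new.
by apply/eq_leq/eq_card => y; rewrite !inE andbC.
Qed.

Section Sweep.

Variables (n : nat) (pi : {perm 'I_n}).

Definition resolved k (i j : 'I_n) : bool :=
  [&& i < j, pi j < pi i & pi j + n < k + i]%N.

Definition before k (i j : 'I_n) : bool :=
  if (i < j)%N then ~~ resolved k i j else resolved k j i.

Lemma val_perm_eq (i j : 'I_n) : (i : nat) = j <-> (pi i : nat) = pi j.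
Proof. by split=> [/val_inj -> | /val_inj/perm_inj ->]. Qed.

Lemma before_irr k : irreflexive (before k).
Proof. by move=> i; rewrite /before /resolved ltnn. Qed.

Lemma before_trans k : transitive (before k).
Proof.
move=> j i l; have := @val_perm_eq i j; have := @val_perm_eq j l.
have := @val_perm_eq i l; rewrite /before /resolved.
by case: (ltnP i j); case: (ltnP j l); case: (ltnP i l); lia.
Qed.

Lemma before_total k i j : i != j -> before k i j || before k j i.
Proof.
move/eqP=> neq_ij; have {neq_ij} : (i : nat) <> j by move/val_inj.
have := @val_perm_eq i j; rewrite /before /resolved.
by case: (ltnP i j); case: (ltnP j i); lia.
Qed.

Lemma before0 i j : before 0 i j = (i < j)%N.
Proof.
have := ltn_ord i; have := ltn_ord j; rewrite /before /resolved.
by case: (ltnP i j); case: (ltnP j i); lia.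
Qed.

Lemma before_top i j : before (n + n) i j = (pi i < pi j)%N.
Proof.
have := @val_perm_eq i j; have := ltn_ord (pi i); have := ltn_ord (pi j).
rewrite /before /resolved.
by case: (ltnP i j); case: (ltnP j i); lia.
Qed.

Definition swaps_at k (i j : 'I_n) : bool :=
  [&& i < j, pi j < pi i & pi j + n == k + i]%N.

Lemma before_succ_new k i j : before k.+1 j i -> ~~ before k j i -> swaps_at k i j.
Proof.
have := @val_perm_eq i j; rewrite /before /resolved /swaps_at.
by case: (ltnP i j); case: (ltnP j i); lia.
Qed.

Lemma before_succ_lost k i j : before k j i -> ~~ before k.+1 j i -> swaps_at k j i.
Proof.
have := @val_perm_eq i j; rewrite /before /resolved /swaps_at.
by case: (ltnP i j); case: (ltnP j i); lia.
Qed.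

Lemma card_swaps_at_l k i : (#|[set j | swaps_at k i j]| <= 1)%N.
Proof.
apply/card_le1_eqP => j j'; rewrite !inE => /and3P [_ _ /eqP eq_j] /and3P [_ _ /eqP eq_j'].
by apply/val_inj/val_perm_eq => /=; lia.
Qed.

Lemma card_swaps_at_r k j : (#|[set i | swaps_at k i j]| <= 1)%N.
Proof.
apply/card_le1_eqP => i i'; rewrite !inE => /and3P [_ _ /eqP eq_i] /and3P [_ _ /eqP eq_i'].
by apply: val_inj => /=; lia.
Qed.

Definition has_swap k : bool := [exists i, exists j, swaps_at k i j].

Lemma before_succ k : ~~ has_swap k -> before k.+1 =2 before k.
Proof.
move=> no_swap j i; apply/idP/idP => [ji_succ | ji].
  apply/negPn/negP => /(before_succ_new ji_succ) swap_ij.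
  by case/negP: no_swap; apply/existsP; exists i; apply/existsP; exists j.
apply/negPn/negP => /(before_succ_lost ji) swap_ji.
by case/negP: no_swap; apply/existsP; exists j; apply/existsP; exists i.
Qed.

Lemma has_swap_Mset k : has_swap k -> (k%:Z - n%:Z)%R \in Mset pi.
Proof.
case/existsP => i /existsP [j /and3P [lt_ij lt_pi /eqP eq_k]].
rewrite /Mset mem_undup; apply/mapP; exists (i, j).
  by rewrite mem_filter /= lt_ij lt_pi mem_enum inE.
by rewrite /=; lia.
Qed.

Definition sweep k : {perm 'I_n} :=
  rank_perm (@before_irr k) (@before_trans k) (@before_total k).

Lemma sweep0 : sweep 0 = 1%g.
Proof. by apply: rank_perm_eq => i j; rewrite before0 !perm1. Qed.

Lemma sweep_top : sweep (n + n) = pi.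
Proof. exact/rank_perm_eq/before_top. Qed.

Lemma sweep_succ k : ~~ has_swap k -> sweep k.+1 = sweep k.
Proof.
move=> no_swap; apply/permP => x; apply: val_inj; rewrite /= !rank_permE.
by apply: eq_card => y; rewrite !inE before_succ.
Qed.

Lemma sweep_succ_near k x :
  (sweep k.+1 x <= (sweep k x).+1 /\ sweep k x <= (sweep k.+1 x).+1)%N.
Proof.
rewrite !rank_permE; split; apply: rank_succ_le.
  apply: leq_trans (card_swaps_at_l k x); apply/subset_leq_card/subsetP => y.
  by rewrite !inE => /andP [] /before_succ_new; apply.
apply: leq_trans (card_swaps_at_r k x); apply/subset_leq_card/subsetP => y.
by rewrite !inE => /andP [] /before_succ_lost; apply.
Qed.

End Sweep.

Theorem theorem1p1 (n : nat) (hn : (0 < n)%N) (pi : {perm 'I_n}) :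
  exists rhos : seq {perm 'I_n},
    [/\ (size rhos <= size (Mset pi))%N,
        all (bandwidth 1) rhos &
        pi = (\prod_(r <- rhos) r)%g].
Proof.
pose step k := ((sweep pi k)^-1 * sweep pi k.+1)%g.
exists [seq step k | k <- iota 0 (n + n) & has_swap pi k]; split.
- rewrite size_map -(size_map (fun k : nat => (k%:Z - n%:Z)%R)).
  apply: uniq_leq_size => [|z /mapP [k]].
    by rewrite map_inj_uniq ?filter_uniq ?iota_uniq // => a b /GRing.addIr [].
  by rewrite mem_filter => /andP [swap_k _] ->; apply: has_swap_Mset.
- by apply/allP => r /mapP [k _ ->]; apply/bandwidth1_mulVg/sweep_succ_near.
- rewrite big_map big_filter big_mkcond /=.
  rewrite (eq_bigr step) ?telescope_prod ?sweep0 ?sweep_top ?invg1 ?mul1g // => k _.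
  by case: ifP => // /negbT /sweep_succ; rewrite /step => ->; rewrite mulVg.
Qed.
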